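(* Consider a $K$-armed bandit with $K>1$ whose realized rewards satisfy $R_t(a)\in[-R_{\max},R_{\max}]$, and let $\eta>0$. Let $\pi_{\boldsymbol\theta_t}$ be a softmax policy, $a_t\sim\pi_{\boldsymbol\theta_t}$, $\hat r_t(a)=\mathbb I\{a_t=a\}R_t(a_t)/\pi_{\boldsymbol\theta_t}(a)$, and $$\widehat\nabla\Phi_\eta(\boldsymbol\theta_t)=(\mathrm{diag}(\pi_{\boldsymbol\theta_t})-\pi_{\boldsymbol\theta_t}\pi_{\boldsymbol\theta_t}^\top)\hat{\mathbf r}_t+\frac1\eta(\mathbf 1-K\pi_{\boldsymbol\theta_t}).$$ Then $$\|\widehat\nabla\Phi_\eta(\boldsymbol\theta_t)\|_2\le\sqrt2R_{\max}\big(1-\pi_{\boldsymbol\theta_t}(a_t)\big)+\frac{2K}{\eta}.$$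
   Context: Softmax policy $\pi_{\boldsymbol\theta}(a)=e^{\theta(a)}/\sum_be^{\theta(b)}$; $\widehat\nabla\Phi_\eta$ is the LB-SGB stochastic gradient of $\Phi_\eta(\boldsymbol\theta)=\pi_{\boldsymbol\theta}^\top\mathbf r+\frac1\eta\sum_a\log\pi_{\boldsymbol\theta}(a)$. *)

From mathcomp Require Import all_boot all_order all_algebra.
From mathcomp Require Import all_classical all_reals all_analysis.
Set Implicit Arguments. Unset Strict Implicit. Unset Printing Implicit Defensive.
Import Order.TTheory GRing.Theory Num.Theory.
Local Open Scope ring_scope.

Definition softmax (R : realType) (K : nat) (theta : 'I_K -> R) (a : 'I_K) : R :=
  expR (theta a) / \sum_(b < K) expR (theta b).

Definition rhat (R : realType) (K : nat) (theta : 'I_K -> R) (at_ : 'I_K)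
  (r : 'I_K -> R) (b : 'I_K) : R :=
  if at_ == b then r at_ / softmax theta b else 0.

Definition lbsgb_grad (R : realType) (K : nat) (eta : R) (theta : 'I_K -> R)
  (at_ : 'I_K) (r : 'I_K -> R) (b : 'I_K) : R :=
  \sum_(c < K) (((b == c)%:R * softmax theta b - softmax theta b * softmax theta c)
                  * rhat theta at_ r c)
  + eta^-1 * (1 - K%:R * softmax theta b).

Definition norm2 (R : realType) (K : nat) (v : 'I_K -> R) : R :=
  Num.sqrt (\sum_(b < K) v b ^+ 2).

From mathcomp Require Import all_boot all_order all_algebra.
From mathcomp Require Import all_classical all_reals all_analysis.
From mathcomp Require Import ring lra.
Set Implicit Arguments. Unset Strict Implicit. Unset Printing Implicit Defensive.
Import Order.TTheory GRing.Theory Num.Theory.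
Local Open Scope ring_scope.

(* Write [p] for the softmax policy and [x = R_t(a_t)].  The importance weight
   [1/p(a_t)] cancels against the softmax Jacobian, so the estimate is
   [x (e_{a_t} - p) + eta^-1 (1 - K p)].  By Minkowski's inequality its norm is
   at most [|x| |e_{a_t} - p| + eta^-1 |1 - K p|].  For any probability vector
   [p], [|e_a - p|^2 = (1 - p_a)^2 + sum_{b <> a} p_b^2 <= 2 (1 - p_a)^2] and
   [|1 - K p|^2 = K^2 sum_b p_b^2 - K <= K^2], which is better than the [2K]
   of the statement. *)

Lemma CauchySchwarz_sum (R : realDomainType) (I : finType) (u v : I -> R) :
  (\sum_i u i * v i) ^+ 2 <= (\sum_i u i ^+ 2) * (\sum_i v i ^+ 2).
Proof.
have lagrange_identity : \sum_i \sum_j (u i * v j - u j * v i) ^+ 2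
    = 2 * ((\sum_i u i ^+ 2) * (\sum_i v i ^+ 2) - (\sum_i u i * v i) ^+ 2).
  have -> : 2 * ((\sum_i u i ^+ 2) * (\sum_i v i ^+ 2) - (\sum_i u i * v i) ^+ 2)
      = (\sum_i u i ^+ 2) * (\sum_i v i ^+ 2) + (\sum_i v i ^+ 2) * (\sum_i u i ^+ 2)
        - 2 * ((\sum_i u i * v i) * (\sum_i u i * v i)) by ring.
  rewrite !big_distrlr mulr_sumr -big_split -sumrB; apply: eq_bigr => i _.
  rewrite mulr_sumr -big_split -sumrB; apply: eq_bigr => j _ /=; ring.
rewrite -subr_ge0 -(pmulr_rge0 _ (ltr0n R 2)) -lagrange_identity.
by do 2!(apply: sumr_ge0 => ? _); exact: sqr_ge0.
Qed.

Lemma sum_sqr_le_sqr_sum (R : realDomainType) (I : finType) (P : pred I)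
    (f : I -> R) :
  (forall i, P i -> 0 <= f i) ->
  \sum_(i | P i) f i ^+ 2 <= (\sum_(i | P i) f i) ^+ 2.
Proof.
move=> f_ge0; rewrite [X in _ <= X]expr2 mulr_suml; apply: ler_sum => i Pi.
rewrite expr2 ler_wpM2l ?f_ge0 // (bigD1 i) //= lerDl.
by apply: sumr_ge0 => j /andP[Pj _]; exact: f_ge0.
Qed.

Section EuclideanNorm.
Variables (R : realType) (K : nat).
Implicit Types (u v : 'I_K -> R) (k : R).

Lemma norm2_ge0 v : 0 <= norm2 v.
Proof. exact: sqrtr_ge0. Qed.

Lemma norm2_scale k v : norm2 (fun b => k * v b) = `|k| * norm2 v.
Proof.
rewrite /norm2 -sqrtr_sqr -sqrtrM ?sqr_ge0 // mulr_sumr.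
by under eq_bigr do rewrite exprMn.
Qed.

Lemma norm2_triangle u v :
  norm2 (fun b => u b + v b) <= norm2 u + norm2 v.
Proof.
have sum_ge0 (w : 'I_K -> R) : 0 <= \sum_b w b ^+ 2.
  by apply: sumr_ge0 => b _; exact: sqr_ge0.
rewrite -(ger0_norm (addr_ge0 (norm2_ge0 u) (norm2_ge0 v))) -sqrtr_sqr /norm2.
rewrite ler_sqrt ?sqr_ge0 // sqrrD !sqr_sqrtr //.
under eq_bigr do rewrite sqrrD.
rewrite 2!big_split sumrMnl lerD2r lerD2l lerMn2r /= -sqrtrM //.
apply: le_trans (ler_norm _) _; rewrite -sqrtr_sqr ler_sqrt ?mulr_ge0 //.
exact: CauchySchwarz_sum.
Qed.

End EuclideanNorm.

Section ProbabilityVector.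
Variables (R : realType) (K : nat) (p : 'I_K -> R).
Hypotheses (p_ge0 : forall b, 0 <= p b) (p_sum1 : \sum_b p b = 1).

Lemma sum_sqr_prob_le1 : \sum_b p b ^+ 2 <= 1.
Proof. by rewrite -(expr1n R 2) -p_sum1 sum_sqr_le_sqr_sum. Qed.

Lemma norm2_dirac_sub_le (a : 'I_K) :
  norm2 (fun b => (a == b)%:R - p b) <= Num.sqrt 2 * (1 - p a).
Proof.
have rest : \sum_(b | b != a) p b = 1 - p a.
  by move: p_sum1; rewrite (bigD1 a) //= => <-; rewrite addrAC subrr add0r.
have rest_ge0 : 0 <= 1 - p a by rewrite -rest sumr_ge0.
rewrite /norm2 -(ger0_norm rest_ge0) -sqrtr_sqr -sqrtrM //.
rewrite ler_wsqrtr // (bigD1 a) //= eqxx mulr_natl mulr2n lerD2l.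
under eq_bigr => b ba do rewrite eq_sym (negbTE ba) sub0r sqrrN.
by rewrite -rest sum_sqr_le_sqr_sum.
Qed.

Lemma norm2_one_sub_le : norm2 (fun b => 1 - K%:R * p b) <= K%:R.
Proof.
rewrite /norm2 -[X in _ <= X]ger0_norm // -sqrtr_sqr ler_wsqrtr //.
have expand b : (1 - K%:R * p b) ^+ 2 = 1 - 2 * K%:R * p b + K%:R ^+ 2 * p b ^+ 2.
  by ring.
under eq_bigr do rewrite expand.
rewrite !big_split sumrN /= -!mulr_sumr p_sum1 sumr_const card_ord.
have := sum_sqr_prob_le1; have : 0 <= K%:R :> R by [].
nra.
Qed.

End ProbabilityVector.

Section Softmax.
Variables (R : realType) (K : nat) (theta : 'I_K -> R).

Lemma sum_expR_gt0 (a : 'I_K) : 0 < \sum_b expR (theta b).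
Proof.
rewrite (bigD1 a) //= ltr_pwDl ?expR_gt0 //.
by apply: sumr_ge0 => b _; exact/ltW/expR_gt0.
Qed.

Lemma softmax_gt0 a : 0 < softmax theta a.
Proof. exact: divr_gt0 (expR_gt0 _) (sum_expR_gt0 a). Qed.

Lemma softmax_sum1 : (0 < K)%N -> \sum_a softmax theta a = 1.
Proof.
by move=> K_gt0; rewrite -mulr_suml divff // gt_eqF // (sum_expR_gt0 (Ordinal K_gt0)).
Qed.

Lemma lbsgb_gradE eta (at_ : 'I_K) r b :
  lbsgb_grad eta theta at_ r b
  = r at_ * ((at_ == b)%:R - softmax theta b)
    + eta^-1 * (1 - K%:R * softmax theta b).
Proof.
rewrite /lbsgb_grad; congr (_ + _).
rewrite (bigD1 at_) //= big1 ?addr0 => [|c]; last first.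
  by rewrite /rhat eq_sym => /negbTE ->; rewrite mulr0.
by rewrite /rhat eqxx; case: eqVneq => [<-|_] /=; field; rewrite gt_eqF ?softmax_gt0.
Qed.

End Softmax.

Theorem lemmaC1 (R : realType) (K : nat) (hK : (1 < K)%N) (Rmax eta : R)
  (heta : 0 < eta) (theta : 'I_K -> R) (at_ : 'I_K) (r : 'I_K -> R)
  (hr : forall a : 'I_K, - Rmax <= r a <= Rmax) :
  norm2 (lbsgb_grad eta theta at_ r)
    <= Num.sqrt 2 * Rmax * (1 - softmax theta at_) + 2 * K%:R / eta.
Proof.
set p := softmax theta.
have p_ge0 b : 0 <= p b by exact/ltW/softmax_gt0.
have p_sum1 : \sum_b p b = 1 by apply/softmax_sum1/ltnW.
have r_le : `|r at_| <= Rmax by rewrite ler_norml hr.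
have eta_inv_ge0 : 0 <= eta^-1 by rewrite invr_ge0 ltW.
have gradE : lbsgb_grad eta theta at_ r
    = fun b => r at_ * ((at_ == b)%:R - p b) + eta^-1 * (1 - K%:R * p b).
  by apply/funext => b; rewrite lbsgb_gradE.
rewrite gradE; apply: le_trans (norm2_triangle _ _) _.
rewrite !norm2_scale (ger0_norm eta_inv_ge0); apply: lerD.
  rewrite mulrAC mulrC ler_pM ?norm2_ge0 //.
  exact: norm2_dirac_sub_le.
rewrite mulrC ler_wpM2r //.
have := norm2_one_sub_le p_ge0 p_sum1; have : 0 <= K%:R :> R by [].
lra.
Qed.
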